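(* Let $X$ be $\mathbf{S}^2\times\mathbb{R}$ or $\mathbf{H}^2\times\mathbb{R}$ in the projective model described in the context, and let $P=(1,x,y,z)$ with $x,y,z\in\mathbb{R}$ and $x^2+y^2+z^2>0$ in $\mathbf{S}^2\times\mathbb{R}$, respectively $x^2-y^2-z^2>0$, $x>0$ in $\mathbf{H}^2\times\mathbb{R}$. Then the translation curve drawn from $E_0=(1,1,0,0)$ to $P$ has at $E_0$ the tangent vector \[ \tau\cdot\mathbf{t}_P=\left(\tfrac12\ln\big(x^2\pm(y^2+z^2)\big),\ \frac{y\,\mathrm{arcC}\Big(\frac{x}{\sqrt{x^2\pm(y^2+z^2)}}\Big)}{\sqrt{y^2+z^2}},\ \frac{z\,\mathrm{arcC}\Big(\frac{x}{\sqrt{x^2\pm(y^2+z^2)}}\Big)}{\sqrt{y^2+z^2}}\right), \] where $\pm$ is $+$ and $\mathrm{arcC}=\arccos$ for $\mathbf{S}^2\times\mathbb{R}$, $\pm$ is $-$ and $\mathrm{arcC}=\mathrm{arccosh}$ for $\mathbf{H}^2\times\mathbb{R}$, $\mathbf{t}_P$ is the unit initial tangent vector and $\tau$ is the translation distance of $P$ and $E_0$.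
   Context: Points are written in homogeneous coordinates $(1,x,y,z)$; $\mathbf{S}^2\times\mathbb{R}$ is the set of such points with $x^2+y^2+z^2>0$ and $\mathbf{H}^2\times\mathbb{R}$ the set with $x^2-y^2-z^2>0$, $x>0$. Let $S,C$ denote $\sin,\cos$ in $\mathbf{S}^2\times\mathbb{R}$ and $\sinh,\cosh$ in $\mathbf{H}^2\times\mathbb{R}$. The translation curves (which coincide with geodesics) starting at $E_0=(1,1,0,0)$ are, with arc-length $\tau\ge0$ and parameters $-\pi<u\le\pi$, $-\pi/2\le v\le\pi/2$: $x(\tau)=e^{\tau\sin v}C(\tau\cos v)$, $y(\tau)=e^{\tau\sin v}S(\tau\cos v)\cos u$, $z(\tau)=e^{\tau\sin v}S(\tau\cos v)\sin u$. Their unit tangent vector at $E_0$ is $\mathbf{t}=(\sin v,\cos v\cos u,\cos v\sin u)$. *)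

From Stdlib Require Import Reals.
Open Scope R_scope.

Inductive geom := S2xR | H2xR.

Definition Sf (g : geom) (t : R) : R := match g with S2xR => sin t | H2xR => sinh t end.
Definition Cf (g : geom) (t : R) : R := match g with S2xR => cos t | H2xR => cosh t end.

Definition sgn (g : geom) : R := match g with S2xR => 1 | H2xR => -1 end.

Definition arccosh (x : R) : R := ln (x + sqrt (x ^ 2 - 1)).
Definition arcC (g : geom) (x : R) : R := match g with S2xR => acos x | H2xR => arccosh x end.

(* Points (1,x,y,z) of the model space *)
Definition in_space (g : geom) (x y z : R) : Prop :=
  match g with
  | S2xR => x ^ 2 + y ^ 2 + z ^ 2 > 0
  | H2xR => x ^ 2 - y ^ 2 - z ^ 2 > 0 /\ x > 0
  end.

(* translation curve from E0 = (1,1,0,0) with parameters u, v, at arc-length tau: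
   returns the (x,y,z) coordinates *)
Definition tcurve (g : geom) (u v tau : R) : R * R * R :=
  (exp (tau * sin v) * Cf g (tau * cos v),
   exp (tau * sin v) * Sf g (tau * cos v) * cos u,
   exp (tau * sin v) * Sf g (tau * cos v) * sin u).

Definition tvec (u v : R) : R * R * R := (sin v, cos v * cos u, cos v * sin u).

Definition scal3 (a : R) (p : R * R * R) : R * R * R :=
  let '(p1, p2, p3) := p in (a * p1, a * p2, a * p3).

Definition param_ok (u v tau : R) : Prop :=
  0 <= tau /\ - PI < u <= PI /\ - (PI / 2) <= v <= PI / 2.

Definition tangent_formula (g : geom) (x y z : R) : R * R * R :=
  let q := x ^ 2 + sgn g * (y ^ 2 + z ^ 2) in
  let r := sqrt (y ^ 2 + z ^ 2) in
  let a := arcC g (x / sqrt q) in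
  (/ 2 * ln q, y * a / r, z * a / r).

From Stdlib Require Import Reals Lra Psatz.
Open Scope R_scope.

(* With E = exp (tau sin v) and rho = tau cos v, the curve point is
   (E C(rho), E S(rho) cos u, E S(rho) sin u).  Since C^2 +- S^2 = 1, the
   quadric x^2 +- (y^2 + z^2) equals E^2 and x / E = C(rho), while (y, z) has
   length E S(rho) and polar angle u.  Hence tau sin v = ln E, tau cos v =
   arcC (x / E), and (y, z) / |(y, z)| = (cos u, sin u), which is the formula.
   Conversely, inverting these polar coordinates yields a curve through P. *)

Lemma Cf2_add_sgn_Sf2 (g : geom) (t : R) : Cf g t ^ 2 + sgn g * Sf g t ^ 2 = 1.
Proof.
destruct g; simpl.
- pose proof (sin2_cos2 t) as H; unfold Rsqr in H; nra.
- assert (Hinv : exp t * exp (- t) = 1).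
  { rewrite <- exp_plus, Rplus_opp_r; apply exp_0. }
  unfold cosh, sinh; nra.
Qed.

Lemma sinh_ge0 (t : R) : 0 <= t -> 0 <= sinh t.
Proof.
intros [Ht | <-].
- rewrite <- sinh_0; now apply Rlt_le, sinh_lt.
- rewrite sinh_0; lra.
Qed.

Lemma Sf_ge0 (g : geom) (t : R) : 0 <= t -> (g = S2xR -> t <= PI) -> 0 <= Sf g t.
Proof.
intros Ht HPI; destruct g; simpl.
- apply sin_ge_0; auto.
- now apply sinh_ge0.
Qed.

Lemma arccosh_cosh (t : R) : 0 <= t -> arccosh (cosh t) = t.
Proof.
intro Ht; unfold arccosh.
pose proof (Cf2_add_sgn_Sf2 H2xR t) as Hid; simpl in Hid.
replace (cosh t ^ 2 - 1) with (sinh t ^ 2) by lra.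
rewrite sqrt_pow2 by now apply sinh_ge0.
replace (cosh t + sinh t) with (exp t) by (unfold cosh, sinh; field).
apply ln_exp.
Qed.

Lemma arcC_Cf (g : geom) (t : R) : 0 <= t -> (g = S2xR -> t <= PI) -> arcC g (Cf g t) = t.
Proof.
intros Ht HPI; destruct g; simpl.
- apply acos_cos; auto.
- now apply arccosh_cosh.
Qed.

Lemma cosh_sinh_ln (w s : R) :
  w ^ 2 - s ^ 2 = 1 -> 0 < w -> cosh (ln (w + s)) = w /\ sinh (ln (w + s)) = s.
Proof.
intros Hws Hw.
assert (Hpos : 0 < w + s) by nra.
assert (Hinv : exp (- ln (w + s)) = w - s).
{ rewrite exp_Ropp, exp_ln by lra; field_simplify_eq; nra. }
unfold cosh, sinh; rewrite Hinv, exp_ln by lra; split; field.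
Qed.

Lemma Cf_Sf_onto (g : geom) (w s : R) :
  w ^ 2 + sgn g * s ^ 2 = 1 -> 0 < s -> (g = H2xR -> 0 < w) ->
  exists rho, 0 < rho /\ (g = S2xR -> rho <= PI) /\ Cf g rho = w /\ Sf g rho = s.
Proof.
intros Hws Hs Hw; destruct g; cbn [Cf Sf sgn] in *.
- assert (Hbound : -1 <= w <= 1) by nra.
  assert (Hsin : sin (acos w) = s).
  { rewrite sin_acos, <- (sqrt_pow2 s) by lra; f_equal; unfold Rsqr; lra. }
  pose proof (acos_bound w).
  exists (acos w); repeat split; try lra; [| now apply cos_acos].
  destruct (Req_dec (acos w) 0) as [H0 | H0]; [| lra].
  rewrite H0, sin_0 in Hsin; lra.
- specialize (Hw eq_refl).
  destruct (cosh_sinh_ln w s) as [Hc Hsh]; [lra | lra |].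
  exists (ln (w + s)); repeat split; try easy.
  rewrite <- ln_1; apply ln_increasing; nra.
Qed.

Lemma cos_sin_onto (a b : R) :
  a ^ 2 + b ^ 2 = 1 -> exists u, - PI < u <= PI /\ cos u = a /\ sin u = b.
Proof.
intro Hab.
assert (Hbound : -1 <= a <= 1) by nra.
assert (Hsin : sin (acos a) = Rabs b).
{ rewrite sin_acos, <- sqrt_Rsqr_abs by lra; f_equal; unfold Rsqr; lra. }
pose proof (acos_bound a); pose proof PI_RGT_0.
destruct (Rle_dec 0 b) as [Hb | Hb].
- rewrite Rabs_pos_eq in Hsin by lra.
  exists (acos a); repeat split; try lra; now apply cos_acos.
- rewrite Rabs_left in Hsin by lra.
  exists (- acos a); rewrite cos_neg, sin_neg, Hsin, cos_acos by lra.
  repeat split; try lra.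
  destruct (Req_dec (acos a) PI) as [HPI | HPI]; [| lra].
  rewrite HPI, sin_PI in Hsin; lra.
Qed.

Lemma polar_right_half_plane (h rho : R) :
  0 < rho -> exists tau v, 0 < tau /\ - (PI / 2) <= v <= PI / 2 /\
    tau * sin v = h /\ tau * cos v = rho.
Proof.
intro Hrho.
pose proof (atan_bound (h / rho)) as Hv.
pose proof (tan_atan (h / rho)) as Htan.
set (v := atan (h / rho)) in *; unfold tan in Htan.
assert (Hcos : 0 < cos v) by (apply cos_gt_0; lra).
exists (rho / cos v), v; repeat split; try lra.
- apply Rdiv_lt_0_compat; lra.
- transitivity (rho * (sin v / cos v)); [field; lra |].
  rewrite Htan; field; lra.
- field; lra.
Qed.

Lemma tangent_formula_polar (g : geom) (E rho u : R) :
  0 < E -> 0 <= rho -> (g = S2xR -> rho <= PI) -> Sf g rho <> 0 ->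
  tangent_formula g (E * Cf g rho) (E * Sf g rho * cos u) (E * Sf g rho * sin u)
  = (ln E, rho * cos u, rho * sin u).
Proof.
intros HE Hrho HPI HS0.
pose proof (Sf_ge0 g rho Hrho HPI) as HS.
assert (Hyz : (E * Sf g rho * cos u) ^ 2 + (E * Sf g rho * sin u) ^ 2
              = (E * Sf g rho) ^ 2).
{ rewrite <- (Rmult_1_r ((E * Sf g rho) ^ 2)), <- (sin2_cos2 u); unfold Rsqr; ring. }
assert (Hq : (E * Cf g rho) ^ 2 + sgn g * (E * Sf g rho) ^ 2 = E ^ 2).
{ rewrite <- (Rmult_1_r (E ^ 2)), <- (Cf2_add_sgn_Sf2 g rho); ring. }
unfold tangent_formula; cbv zeta.
rewrite Hyz, Hq, !sqrt_pow2 by nra.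
replace (E * Cf g rho / E) with (Cf g rho) by (field; lra).
rewrite arcC_Cf, ln_pow by assumption.
f_equal; [f_equal |]; simpl; field; split; lra.
Qed.

Lemma tcurve_tangent_formula (g : geom) (x y z u v tau : R) :
  y ^ 2 + z ^ 2 > 0 ->
  param_ok u v tau -> tcurve g u v tau = (x, y, z) ->
  (g = S2xR -> tau * cos v <= PI) ->
  scal3 tau (tvec u v) = tangent_formula g x y z.
Proof.
intros Hyz [Htau [_ Hv]] Hcurve HPI.
injection Hcurve as <- <- <-.
assert (Hrho : 0 <= tau * cos v) by (apply Rmult_le_pos, cos_ge_0; lra).
assert (HS0 : Sf g (tau * cos v) <> 0).
{ intro HS0; rewrite HS0 in Hyz; lra. }
rewrite tangent_formula_polar, ln_exp by auto using exp_pos.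
unfold scal3, tvec; f_equal; [f_equal |]; ring.
Qed.

Lemma tcurve_onto (g : geom) (x y z : R) :
  in_space g x y z -> y ^ 2 + z ^ 2 > 0 ->
  exists u v tau, param_ok u v tau /\ tcurve g u v tau = (x, y, z) /\
    (g = S2xR -> tau * cos v <= PI).
Proof.
intros Hin Hyz.
set (q := x ^ 2 + sgn g * (y ^ 2 + z ^ 2)).
assert (Hq : 0 < q) by (unfold q; destruct g; simpl in *; nra).
set (r := sqrt (y ^ 2 + z ^ 2)).
assert (Hr : 0 < r) by (apply sqrt_lt_R0; lra).
assert (Hr2 : r ^ 2 = y ^ 2 + z ^ 2) by (apply pow2_sqrt; lra).
set (E := sqrt q).
assert (HE : 0 < E) by (apply sqrt_lt_R0; lra).
assert (HE2 : E ^ 2 = q) by (apply pow2_sqrt; lra).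
destruct (Cf_Sf_onto g (x / E) (r / E)) as [rho [Hrho [HPI [HC HS]]]].
{ replace ((x / E) ^ 2 + sgn g * (r / E) ^ 2) with ((x ^ 2 + sgn g * r ^ 2) / E ^ 2)
    by (field; lra).
  rewrite Hr2, HE2; fold q; field; lra. }
{ apply Rdiv_lt_0_compat; lra. }
{ intros ->; destruct Hin; apply Rdiv_lt_0_compat; lra. }
destruct (polar_right_half_plane (ln E) rho Hrho) as [tau [v [Htau [Hv [Hsin Hcos]]]]].
destruct (cos_sin_onto (y / r) (z / r)) as [u [Hu [Hcu Hsu]]].
{ replace ((y / r) ^ 2 + (z / r) ^ 2) with ((y ^ 2 + z ^ 2) / r ^ 2) by (field; lra).
  rewrite Hr2; field; lra. }
exists u, v, tau; repeat split; try lra.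
- unfold tcurve; rewrite Hsin, exp_ln, Hcos, HC, HS, Hcu, Hsu by lra.
  f_equal; [f_equal |]; field; lra.
- now rewrite Hcos.
Qed.

Theorem lemma4p9 (g : geom) (x y z : R) :
  in_space g x y z ->
  y ^ 2 + z ^ 2 > 0 ->
  (exists u v tau : R,
      param_ok u v tau /\ tcurve g u v tau = (x, y, z) /\
      (g = S2xR -> tau * cos v <= PI) /\
      scal3 tau (tvec u v) = tangent_formula g x y z) /\
  (forall u v tau : R,
      param_ok u v tau -> tcurve g u v tau = (x, y, z) ->
      (g = S2xR -> tau * cos v <= PI) ->
      scal3 tau (tvec u v) = tangent_formula g x y z).
Proof.
intros Hin Hyz; split.
- destruct (tcurve_onto g x y z Hin Hyz) as [u [v [tau [Hok [Hcurve HPI]]]]].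
  exists u, v, tau; do 3 (split; [assumption |]).
  now apply tcurve_tangent_formula.
- intros u v tau; now apply tcurve_tangent_formula.
Qed.
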